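(* Let $\equiv_2$ be the equivalence relation on $\mathfrak S_n$ generated by the relations $bac\equiv_2 bca$ and $abc\equiv_2 acb$ for letters $a<b<c$ in three consecutive positions. Then two permutations of $\mathfrak S_n$ are $\equiv_2$-equivalent if and only if they have the same left-to-right minima (the same sequence of values $\sigma_j$ such that all letters to the left of $\sigma_j$ are greater than $\sigma_j$).
   Context: Permutations are words $\sigma_1\cdots\sigma_n$; the relations replace three adjacent letters forming one pattern by the same letters arranged as the other pattern, and conversely. *)

From mathcomp Require Import all_boot all_order all_fingroup.
From Stdlib Require Import Relations.Relation_Operators.
Set Implicit Arguments. Unset Strict Implicit. Unset Printing Implicit Defensive.

(* A permutation s of 'S_n is viewed as the word s(0) s(1) ... s(n-1)
   over the letters 0..n-1 (the shift from 1..n is irrelevant). *)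
Definition word (n : nat) (s : 'S_n) : seq nat := [seq val (s i) | i <- enum 'I_n].

Definition step2 (n : nat) (s t : 'S_n) : Prop :=
  exists (p q : seq nat) (a b c : nat), a < b /\ b < c /\
    ((word s = p ++ [:: b; a; c] ++ q /\ word t = p ++ [:: b; c; a] ++ q) \/
     (word s = p ++ [:: a; b; c] ++ q /\ word t = p ++ [:: a; c; b] ++ q)).

Definition equiv2 (n : nat) : 'S_n -> 'S_n -> Prop :=
  clos_refl_sym_trans 'S_n (@step2 n).

Definition ltr_minima (w : seq nat) : seq nat :=
  [seq nth 0 w j | j <- iota 0 (size w) & all (fun x => nth 0 w j < x) (take j w)].

From mathcomp Require Import all_boot all_order all_fingroup.
From Stdlib Require Import Relations.Relation_Operators.
Set Implicit Arguments. Unset Strict Implicit. Unset Printing Implicit Defensive.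

(* Both relations swap two adjacent letters the larger of which is preceded by
   a smaller letter: it is then no left-to-right minimum in either order, and
   the status of the other letter is unchanged, so the minima are invariant.
   Conversely, every word is equivalent to its normal form: its left-to-right
   minima followed by the other letters in increasing order.  The normal form
   is built letter by letter: a new letter is bubbled leftwards through the
   sorted non-minima, and each bubble step is one relation because the letter
   in front of the jumped one is smaller than it.  Two permutations with the
   same minima have the same normal form. *)

Definition wstep (u v : seq nat) : Prop :=
  exists (p q : seq nat) (a b c : nat), a < b /\ b < c /\
    ((u = p ++ [:: b; a; c] ++ q /\ v = p ++ [:: b; c; a] ++ q) \/
     (u = p ++ [:: a; b; c] ++ q /\ v = p ++ [:: a; c; b] ++ q)).

Notation wequiv := (clos_refl_sym_trans (seq nat) wstep).

Lemma ltr_minima_rcons w x : ltr_minima (rcons w x) =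
  ltr_minima w ++ (if all (fun y => x < y) w then [:: x] else [::]).
Proof.
rewrite /ltr_minima size_rcons -addn1 iotaD filter_cat map_cat add0n.
have nth_take_rcons j : j \in iota 0 (size w) ->
    nth 0 (rcons w x) j = nth 0 w j /\ take j (rcons w x) = take j w.
  rewrite mem_iota add0n => /= jw.
  by rewrite nth_rcons jw -cats1 takel_cat // ltnW.
congr (_ ++ _).
  rewrite (eq_in_filter (a2 := fun j => all (fun y => nth 0 w j < y) (take j w))).
    by apply/eq_in_map => j; rewrite mem_filter => /andP[_ /nth_take_rcons[-> _]].
  by move=> j /nth_take_rcons[-> ->].
rewrite /= nth_rcons ltnn eqxx -cats1 take_size_cat //.
by case: ifP => /= _; rewrite ?nth_cat ?ltnn ?subnn.
Qed.

Lemma ltr_minima_catr u v q : ltr_minima u = ltr_minima v -> u =i v ->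
  ltr_minima (u ++ q) = ltr_minima (v ++ q).
Proof.
move=> eq_min eq_mem; elim/last_ind: q => [|q z IHq]; first by rewrite !cats0.
by rewrite -!rcons_cat !ltr_minima_rcons IHq !all_cat (eq_all_r eq_mem).
Qed.

Lemma ltr_minima_swap p x z q : has (fun y => y < z) p ->
  ltr_minima (p ++ x :: z :: q) = ltr_minima (p ++ z :: x :: q).
Proof.
case/hasP=> y yp yz; rewrite -!cat_rcons; apply: ltr_minima_catr; last first.
  by move=> w; rewrite !(inE, mem_rcons) orbCA.
have z_not_min : all (fun w => z < w) p = false.
  by apply/negbTE/allPn; exists y; rewrite // -leqNgt ltnW.
rewrite !ltr_minima_rcons !all_rcons z_not_min andbF !cats0.
case: ifP => [/allP x_min | _]; last by rewrite andbF.
by rewrite (ltn_trans (x_min y yp) yz).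
Qed.

Lemma wstep_ltr_minima u v : wstep u v -> ltr_minima u = ltr_minima v.
Proof.
move=> [p [q [a [b [c [ab [bc [[-> ->] | [-> ->]]]]]]]]] /=;
  rewrite -!(cat_rcons _ p); apply: ltr_minima_swap; rewrite has_rcons.
  by rewrite bc.
by rewrite (ltn_trans ab bc).
Qed.

Lemma wstep_perm_eq u v : wstep u v -> perm_eq u v.
Proof.
by move=> [p [q [a [b [c [_ [_ [[-> ->] | [-> ->]]]]]]]]];
  rewrite perm_cat2l perm_cat2r perm_cons (perm_catC [:: _]).
Qed.

Lemma wequiv_ltr_minima u v : wequiv u v -> ltr_minima u = ltr_minima v.
Proof.
by elim=> {u v} [u v /wstep_ltr_minima | u | u v _ -> | u v w _ -> _ ->].
Qed.

Lemma wequiv_perm_eq u v : wequiv u v -> perm_eq u v.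
Proof.
elim=> {u v} [u v /wstep_perm_eq // | u | u v _ | u v w _ uv _ vw].
- exact: perm_refl.
- by rewrite perm_sym.
- exact: perm_trans uv vw.
Qed.

Lemma wequiv_cat P Q u v : wequiv u v -> wequiv (P ++ u ++ Q) (P ++ v ++ Q).
Proof.
elim=> {u v} [u v [p [q [a [b [c [ab [bc uv]]]]]]] | u | u v _ IH |
               u v w _ IH1 _ IH2].
- apply: rst_step; exists (P ++ p), (q ++ Q), a, b, c; do 2 split => //.
  by case: uv => [[-> ->] | [-> ->]]; [left | right]; rewrite !catA.
- exact: rst_refl.
- exact: rst_sym.
- exact: rst_trans IH2.
Qed.

Lemma wequiv_swap P Q y x s : y < s -> x < s -> x != y ->
  wequiv (P ++ [:: y; s; x] ++ Q) (P ++ [:: y; x; s] ++ Q).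
Proof.
move=> ys xs; rewrite neq_ltn => /orP[xy | yx]; apply/rst_sym/rst_step.
- by exists P, Q, x, y, s; do 2 split => //; left.
- by exists P, Q, y, x, s; do 2 split => //; right.
Qed.

Lemma filter_lt_nil x S : all (ltn x) S -> [seq z <- S | z < x] = [::].
Proof.
move=> /allP x_min; rewrite (eq_in_filter (a2 := pred0)) ?filter_pred0 //.
by move=> z /x_min xz; rewrite /= ltnNge ltnW.
Qed.

Lemma wequiv_insert S P Q y x : path ltn y S -> x \notin y :: S ->
  wequiv (P ++ y :: S ++ x :: Q)
         (P ++ y :: [seq z <- S | z < x] ++ x :: [seq z <- S | x < z] ++ Q).
Proof.
elim: S P y => [|s S IHS] P y /=; first by move=> *; apply: rst_refl.
move=> /andP[ys sS]; rewrite in_cons negb_or => /andP[xy xsS].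
have := IHS (rcons P y) s sS xsS; rewrite !cat_rcons.
case: ltngtP => [// | xs | sx]; last by rewrite sx mem_head in xsS.
have x_min : all (ltn x) S.
  move: sS; rewrite (path_sortedE ltn_trans) => /andP[/allP s_min _].
  by apply/allP => z /s_min; apply: ltn_trans xs.
rewrite (all_filterP x_min) filter_lt_nil //= => IH.
exact: rst_trans IH (wequiv_swap P (S ++ Q) ys xs xy).
Qed.

Lemma sorted_ltn_insert x S : sorted ltn S ->
  sorted ltn ([seq z <- S | z < x] ++ x :: [seq z <- S | x < z]).
Proof.
rewrite !(sorted_pairwise ltn_trans) pairwise_cat pairwise_cons filter_all => sS.
rewrite !pairwise_filter // !andbT; apply/allrelP => z w.
rewrite in_cons !mem_filter => /andP[zx _] /predU1P[-> // | /andP[xw _]].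
exact: ltn_trans xw.
Qed.

Lemma ltr_minima_lastP u : u != [::] -> exists M y,
  [/\ ltr_minima u = rcons M y, y \in u & {in u, forall z, y <= z}].
Proof.
elim/last_ind: u => // u x IHu _; rewrite ltr_minima_rcons.
case: ifP => [/allP x_min | /negbT/allPn[z zu]].
  exists (ltr_minima u), x; split; rewrite ?cats1 ?mem_rcons ?mem_head //.
  by move=> z; rewrite mem_rcons inE => /predU1P[-> // | /x_min /ltnW].
rewrite -leqNgt cats0 => zx.
have [|M [y [-> yu y_min]]] := IHu; first by case: (u) zu.
exists M, y; split; rewrite ?mem_rcons ?inE ?yu ?orbT //.
move=> w; rewrite mem_rcons inE => /predU1P[-> | /y_min //].
exact: leq_trans (y_min z zu) zx.
Qed.

Lemma wequiv_normal_form u : uniq u ->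
  exists2 S, sorted ltn S & wequiv u (ltr_minima u ++ S).
Proof.
elim/last_ind: u => [_ | u x IHu]; first by exists [::]; last exact: rst_refl.
rewrite rcons_uniq => /andP[xu uu].
have [-> | u_nz] := eqVneq u [::]; first by exists [::]; last exact: rst_refl.
have [S sS uS] := IHu uu.
have [M [y [lmu yu y_min]]] := ltr_minima_lastP u_nz.
rewrite lmu cat_rcons in uS.
have yS_u : {subset y :: S <= u}.
  by move=> z zS; rewrite (perm_mem (wequiv_perm_eq uS)) mem_cat zS orbT.
have yS : path ltn y S.
  have := uu; rewrite (perm_uniq (wequiv_perm_eq uS)) cat_uniq /=.
  case/and4P=> _ _ yNS _.
  rewrite (path_sortedE ltn_trans) sS andbT; apply/allP => z zS.
  rewrite ltn_neqAle y_min ?yS_u ?inE ?zS ?orbT // andbT.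
  by apply: contraNneq yNS => ->.
have xNyS : x \notin y :: S by apply: contra xu; apply: yS_u.
have ux : wequiv (rcons u x) (M ++ y :: S ++ [:: x]).
  by have := wequiv_cat [::] [:: x] uS; rewrite /= cats1 -catA.
have ins := wequiv_insert M [::] yS xNyS; rewrite cats0 in ins.
rewrite ltr_minima_rcons lmu; case: ifP => [/allP x_min | _]; last first.
  exists ([seq z <- S | z < x] ++ x :: [seq z <- S | x < z]).
    exact: sorted_ltn_insert.
  by rewrite cats0 cat_rcons; apply: rst_trans ux ins.
have x_minS : all (ltn x) S.
  by apply/allP => z zS; apply/x_min/yS_u; rewrite inE zS orbT.
rewrite (all_filterP x_minS) filter_lt_nil // in ins.
by exists S; rewrite // -catA cat_rcons; apply: rst_trans ux ins.
Qed.

Section Words.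
Variable n : nat.

Lemma word_uniq (s : 'S_n) : uniq (word s).
Proof. by rewrite map_inj_uniq ?enum_uniq // => i j /val_inj /perm_inj. Qed.

Lemma word_inj : injective (@word n).
Proof.
move=> s t /eq_in_map st; apply/permP => i; apply/val_inj.
exact: st (mem_enum _ i).
Qed.

Lemma perm_eq_word (s t : 'S_n) : perm_eq (word t) (word s).
Proof.
have -> : word s = [tuple val (s i) | i < n] by [].
apply/tuple_permP; exists (t * s^-1)%g.
by apply: eq_map => i; rewrite tnth_mktuple permM permKV.
Qed.

Lemma word_of_perm_eq (s : 'S_n) w :
  perm_eq w (word s) -> exists t : 'S_n, word t = w.
Proof.
have -> : word s = [tuple val (s i) | i < n] by [].
case/tuple_permP=> p ->; exists (p * s)%g.
by apply: eq_map => i; rewrite tnth_mktuple permM.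
Qed.

Lemma wequiv_equiv2 u v : wequiv u v ->
  forall s t : 'S_n, word s = u -> word t = v -> equiv2 s t.
Proof.
elim=> {u v} [u v uv | u | u v _ IH | u v w uv IHuv _ IHvw] s t su tv.
- by apply: rst_step; rewrite /step2 su tv.
- by rewrite (word_inj (etrans su (esym tv))); apply: rst_refl.
- exact/rst_sym/IH.
- have [r rv] : exists r : 'S_n, word r = v.
    by apply: (word_of_perm_eq (s := s)); rewrite su perm_sym wequiv_perm_eq.
  exact: rst_trans (IHuv s r su rv) (IHvw r t rv tv).
Qed.

End Words.

Theorem mainTheorem11 (n : nat) (s t : 'S_n) :
  equiv2 s t <-> ltr_minima (word s) = ltr_minima (word t).
Proof.
split=> [|same_minima].
  by elim=> {s t} [s t /wstep_ltr_minima | s | s t _ -> | s t r _ -> _ ->].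
have [S sS sN] := wequiv_normal_form (word_uniq s).
have [T sT tN] := wequiv_normal_form (word_uniq t).
have eqST : S = T.
  apply: (irr_sorted_eq ltn_trans ltnn sS sT); apply: perm_mem.
  rewrite -(perm_cat2l (ltr_minima (word t))) -{1}same_minima.
  apply: perm_trans (perm_trans (perm_eq_word t s) (wequiv_perm_eq tN)).
  by rewrite perm_sym wequiv_perm_eq.
apply: (@wequiv_equiv2 n (word s) (word t)) => //; apply: rst_trans sN _.
by rewrite same_minima eqST; apply: rst_sym.
Qed.
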